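(* Let $\mathsf{T} = (T,\eta,\mu)$ be a monoid in a left-skew monoidal category $(\mathcal{C},\mathsf{I},\otimes,\lambda,\rho,\alpha)$, and let $(\mathcal{E},\mathcal{M})$ be an orthogonal factorization system on $\mathcal{C}$ such that $\mathcal{E}$ is closed under $(-)\otimes S$ for each object $(S,s)$ of $\mathcal{M}/T$. Then the $\mathcal{M}$-grading $(\mathcal{M}/\mathsf{T}, T_{\mathcal{M}}, \tau)$ of $\mathsf{T}$ (see context) is a pseudoterminal object of the 2-category $\mathrm{Grade}_{\mathcal{M}}(\mathsf{T})$. Explicitly, for every $\mathcal{M}$-grading $(\mathcal{G},G,g)$ of the monoid $\mathsf{T}$: (i) there is a morphism of $\mathcal{M}$-gradings $(F,f):(\mathcal{G},G,g)\to(\mathcal{M}/\mathsf{T},T_{\mathcal{M}},\tau)$; (ii) it is essentially unique, in that there is an assignment, natural in $(F',f')$, of an invertible 2-cell $(F',f')\cong(F,f)$ to every morphism of $\mathcal{M}$-gradings $(F',f'):(\mathcal{G},G,g)\to(\mathcal{M}/\mathsf{T},T_{\mathcal{M}},\tau)$.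
   Context: Left-skew monoidal category: category with object $\mathsf{I}$, functor $\otimes$, and natural (not necessarily invertible) $\lambda_X:\mathsf{I}\otimes X\to X$, $\rho_X:X\to X\otimes\mathsf{I}$, $\alpha_{X,Y,Z}:(X\otimes Y)\otimes Z\to X\otimes(Y\otimes Z)$ satisfying $\lambda_{\mathsf{I}}\rho_{\mathsf{I}}=\mathrm{id}$, $(X\otimes\lambda_Y)\alpha_{X,\mathsf{I},Y}(\rho_X\otimes Y)=\mathrm{id}$, $\lambda_{X\otimes Y}\alpha_{\mathsf{I},X,Y}=\lambda_X\otimes Y$, $\alpha_{X,Y,\mathsf{I}}\rho_{X\otimes Y}=X\otimes\rho_Y$, and the pentagon $(X\otimes\alpha_{Y,Z,W})\alpha_{X,Y\otimes Z,W}(\alpha_{X,Y,Z}\otimes W)=\alpha_{X,Y,Z\otimes W}\alpha_{X\otimes Y,Z,W}$. A monoid: $\eta:\mathsf{I}\to T$, $\mu:T\otimes T\to T$ with $\mu(\eta\otimes T)=\lambda_T$, $\mu(T\otimes\eta)\rho_T=\mathrm{id}$, $\mu(\mu\otimes T)=\mu(T\otimes\mu)\alpha_{T,T,T}$. Lax monoidal functors between skew monoidal categories (functor $G$ with $\eta^G:\mathsf{I}\to G I$ and natural $\mu^G_{d,d'}:Gd\otimes Gd'\to G(d\odot d')$ satisfying the usual unit and associativity axioms) and monoidal transformations are defined as for monoidal categories. Orthogonal factorization system $(\mathcal{E},\mathcal{M})$: both classes contain isomorphisms and are closed under composition, every square $g e = m f$ with $e\in\mathcal{E}$, $m\in\mathcal{M}$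 has a unique diagonal $d$ with $de=f$, $md=g$, and every morphism factors as an $\mathcal{E}$-morphism followed by an $\mathcal{M}$-morphism. $\mathcal{M}$-grading of $\mathsf{T}$: a skew monoidal category $\mathcal{G}=(\mathcal{G},I,\odot)$, a lax monoidal functor $G:\mathcal{G}\to\mathcal{C}$, and a monoidal transformation with components $g_d:Gd\to T$ in $\mathcal{M}$ (monoidality: $g_I\circ\eta^G=\eta$ and $g_{d\odot d'}\circ\mu^G_{d,d'}=\mu\circ(g_d\otimes g_{d'})$). A morphism $(F,f)$ of gradings is a lax monoidal $F:\mathcal{G}\to\mathcal{G}'$ with a monoidal natural isomorphism $f:G'\cdot F\cong G$ such that $g_d\circ f_d = g'_{Fd}$. A 2-cell $\beta:(F,f)\Rightarrow(F',f')$ is a monoidal transformation $\beta:F\Rightarrow F'$ with $f'\circ(G'\cdot\beta)=f$. These form the 2-category $\mathrm{Grade}_{\mathcal{M}}(\mathsf{T})$. The canonical grading: $\mathcal{M}/T$ has objects $(S,s)$ with $s:S\to T$ in $\mathcal{M}$ and morphisms $f$ with $s'f=s$. Factor $\eta=j\circ q$ ($q:\mathsf{I}\to\mathsf{J}\in\mathcal{E}$, $j\in\mathcal{M}$) and $\mu\circ(s\otimes s')=(s\boxdot s')\circ q_{S,S'}$ ($q_{S,S'}:S\otimes S'\to S\boxdot S'\in\mathcal{E}$, $s\boxdot s'\in\mathcal{M}$). Then $\mathcal{M}/\mathsf{T}=(\mathcal{M}/T,(\mathsf{J},j),\boxdot)$ is a skew monoidal category, with action on morphisms and structure maps $\ell,r,a$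 the unique morphisms (diagonals) compatible with the $q$'s and the structure maps of $\mathcal{C}$: $(f\boxdot f')q_{S_1,S_1'}=q_{S_2,S_2'}(f\otimes f')$; $\ell_S q_{\mathsf{J},S}(q\otimes S)=\lambda_S$; $r_S=q_{S,\mathsf{J}}(S\otimes q)\rho_S$; $a\, q_{S\boxdot S',S''}(q_{S,S'}\otimes S'')=q_{S,S'\boxdot S''}(S\otimes q_{S',S''})\alpha$ (each also commuting with the $\mathcal{M}$-maps to $T$). The lax monoidal functor $T_{\mathcal{M}}:\mathcal{M}/\mathsf{T}\to\mathcal{C}$ sends $(S,s)\mapsto S$, with unit $q$ and multiplication $q_{S,S'}$; the monoidal transformation $\tau$ has components $\tau_{(S,s)}=s$. *)

From Stdlib Require Import ClassicalEpsilon.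

Set Implicit Arguments.
Unset Strict Implicit.

Record Cat := mkCat {
  obj :> Type;
  hom : obj -> obj -> Type;
  idm : forall A, hom A A;
  comp : forall A B D, hom B D -> hom A B -> hom A D }.
Arguments hom {_} _ _.
Arguments idm {_} A.
Arguments comp {_ A B D} _ _.
Notation "g ∘ f" := (comp g f) (at level 40, left associativity).

Record IsCat (C : Cat) : Prop := {
  comp_idl : forall (A B : C) (f : hom A B), idm B ∘ f = f;
  comp_idr : forall (A B : C) (f : hom A B), f ∘ idm A = f;
  comp_assoc : forall (A B D E : C) (h : hom D E) (g : hom B D) (f : hom A B),
      h ∘ (g ∘ f) = (h ∘ g) ∘ f }.

Definition IsIso (C : Cat) (A B : C) (f : hom A B) : Prop :=
  exists g : hom B A, g ∘ f = idm A /\ f ∘ g = idm B.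

Record SkewData := mkSkew {
  sk_cat :> Cat;
  sI : sk_cat;
  stens : sk_cat -> sk_cat -> sk_cat;
  tm : forall (A B A' B' : sk_cat), hom A B -> hom A' B' -> hom (stens A A') (stens B B');
  slam : forall X : sk_cat, hom (stens sI X) X;
  srho : forall X : sk_cat, hom X (stens X sI);
  salpha : forall X Y Z : sk_cat, hom (stens (stens X Y) Z) (stens X (stens Y Z)) }.
Arguments sI s : clear implicits.
Arguments stens {_} _ _.
Arguments tm {_ A B A' B'} _ _.
Arguments slam {_} X.
Arguments srho {_} X.
Arguments salpha {_} X Y Z.
Notation "X ⊗ Y" := (stens X Y) (at level 34, left associativity).

Record IsSkewMonoidal (C : SkewData) : Prop := {
  sk_isCat : IsCat C;
  tm_id : forall A A' : C, tm (idm A) (idm A') = idm (A ⊗ A');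
  tm_comp : forall (A B D A' B' D' : C) (g : hom B D) (f : hom A B)
                   (g' : hom B' D') (f' : hom A' B'),
      tm (g ∘ f) (g' ∘ f') = tm g g' ∘ tm f f';
  lam_nat : forall (X Y : C) (f : hom X Y), f ∘ slam X = slam Y ∘ tm (idm (sI C)) f;
  rho_nat : forall (X Y : C) (f : hom X Y), tm f (idm (sI C)) ∘ srho X = srho Y ∘ f;
  alpha_nat : forall (X X' Y Y' Z Z' : C) (f : hom X X') (g : hom Y Y') (h : hom Z Z'),
      tm f (tm g h) ∘ salpha X Y Z = salpha X' Y' Z' ∘ tm (tm f g) h;
  sk_ax1 : slam (sI C) ∘ srho (sI C) = idm (sI C);
  sk_ax2 : forall X Y : C,
      tm (idm X) (slam Y) ∘ salpha X (sI C) Y ∘ tm (srho X) (idm Y) = idm (X ⊗ Y);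
  sk_ax3 : forall X Y : C, slam (X ⊗ Y) ∘ salpha (sI C) X Y = tm (slam X) (idm Y);
  sk_ax4 : forall X Y : C, salpha X Y (sI C) ∘ srho (X ⊗ Y) = tm (idm X) (srho Y);
  sk_ax5 : forall X Y Z W : C,
      tm (idm X) (salpha Y Z W) ∘ salpha X (Y ⊗ Z) W ∘ tm (salpha X Y Z) (idm W)
      = salpha X Y (Z ⊗ W) ∘ salpha (X ⊗ Y) Z W }.

Record IsMonoid (C : SkewData) (T : C) (eta : hom (sI C) T) (mu : hom (T ⊗ T) T) : Prop := {
  mon_lunit : mu ∘ tm eta (idm T) = slam T;
  mon_runit : mu ∘ tm (idm T) eta ∘ srho T = idm T;
  mon_assoc : mu ∘ tm mu (idm T) = mu ∘ tm (idm T) mu ∘ salpha T T T }.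

Definition MorClass (C : Cat) := forall A B : C, hom A B -> Prop.

Record IsOFS (C : Cat) (E M : MorClass C) : Prop := {
  E_iso : forall (A B : C) (f : hom A B), IsIso f -> E A B f;
  M_iso : forall (A B : C) (f : hom A B), IsIso f -> M A B f;
  E_comp : forall (A B D : C) (f : hom A B) (g : hom B D),
      E A B f -> E B D g -> E A D (g ∘ f);
  M_comp : forall (A B D : C) (f : hom A B) (g : hom B D),
      M A B f -> M B D g -> M A D (g ∘ f);
  ofs_lift : forall (A B X Y : C) (e : hom A B) (m : hom X Y) (f : hom A X) (g : hom B Y),
      E A B e -> M X Y m -> g ∘ e = m ∘ f ->
      exists! d : hom B X, d ∘ e = f /\ m ∘ d = g;
  ofs_fact : forall (A B : C) (h : hom A B),
      exists (Z : C) (e : hom A Z) (m : hom Z B), E A Z e /\ M Z B m /\ m ∘ e = h }.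

Record LaxFunctor (D C : SkewData) := mkLax {
  fo : D -> C;
  fm : forall a b : D, hom a b -> hom (fo a) (fo b);
  lf_eta : hom (sI C) (fo (sI D));
  lf_mu : forall a b : D, hom (fo a ⊗ fo b) (fo (a ⊗ b)) }.
Arguments fo {D C} _ _.
Arguments fm {D C} _ {a b} _.
Arguments lf_eta {D C} _.
Arguments lf_mu {D C} _ a b.

Record IsLaxMonoidal (D C : SkewData) (F : LaxFunctor D C) : Prop := {
  lf_id : forall a : D, fm F (idm a) = idm (fo F a);
  lf_comp : forall (a b c : D) (g : hom b c) (f : hom a b), fm F (g ∘ f) = fm F g ∘ fm F f;
  lf_mu_nat : forall (a a' b b' : D) (f : hom a a') (g : hom b b'),
      lf_mu F a' b' ∘ tm (fm F f) (fm F g) = fm F (tm f g) ∘ lf_mu F a b;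
  lf_lunit : forall a : D,
      fm F (slam a) ∘ lf_mu F (sI D) a ∘ tm (lf_eta F) (idm (fo F a)) = slam (fo F a);
  lf_runit : forall a : D,
      lf_mu F a (sI D) ∘ tm (idm (fo F a)) (lf_eta F) ∘ srho (fo F a) = fm F (srho a);
  lf_assoc : forall a b c : D,
      fm F (salpha a b c) ∘ lf_mu F (a ⊗ b) c ∘ tm (lf_mu F a b) (idm (fo F c))
      = lf_mu F a (b ⊗ c) ∘ tm (idm (fo F a)) (lf_mu F b c) ∘ salpha (fo F a) (fo F b) (fo F c) }.

Definition IsMonTrans (D C : SkewData) (F F' : LaxFunctor D C)
    (th : forall a : D, hom (fo F a) (fo F' a)) : Prop :=
  (forall (a b : D) (h : hom a b), th b ∘ fm F h = fm F' h ∘ th a) /\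
  th (sI D) ∘ lf_eta F = lf_eta F' /\
  (forall a b : D, th (a ⊗ b) ∘ lf_mu F a b = lf_mu F' a b ∘ tm (th a) (th b)).

Arguments IsMonTrans {D C} F F' th.

Definition lax_comp (D C B : SkewData) (F : LaxFunctor D C) (G : LaxFunctor C B)
  : LaxFunctor D B :=
  @mkLax D B (fun a => fo G (fo F a)) (fun a b h => fm G (fm F h))
    (fm G (lf_eta F) ∘ lf_eta G)
    (fun a b => fm G (lf_mu F a b) ∘ lf_mu G (fo F a) (fo F b)).

Record GradingData (C : SkewData) (T : C) := mkGrading {
  gd_cat : SkewData;
  gd_G : LaxFunctor gd_cat C;
  gd_g : forall d : gd_cat, hom (fo gd_G d) T }.
Arguments GradingData : clear implicits.
Arguments gd_cat {C T} _.
Arguments gd_G {C T} _.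
Arguments gd_g {C T} _ d.

(* (G, g) is an M-grading: G lax monoidal, g a monoidal transformation
   from G to the monoid T (viewed as the constant lax monoidal functor),
   with components in M. *)
Definition IsGrading (C : SkewData) (T : C) (eta : hom (sI C) T) (mu : hom (T ⊗ T) T)
    (M : MorClass C) (X : GradingData C T) : Prop :=
  IsSkewMonoidal (gd_cat X) /\ IsLaxMonoidal (gd_G X) /\
  (forall (d d' : gd_cat X) (h : hom d d'), gd_g X d' ∘ fm (gd_G X) h = gd_g X d) /\
  gd_g X (sI (gd_cat X)) ∘ lf_eta (gd_G X) = eta /\
  (forall d d' : gd_cat X,
      gd_g X (d ⊗ d') ∘ lf_mu (gd_G X) d d' = mu ∘ tm (gd_g X d) (gd_g X d')) /\
  (forall d : gd_cat X, M _ _ (gd_g X d)).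

Record GMor (C : SkewData) (T : C) (X Y : GradingData C T) := mkGMor {
  gm_F : LaxFunctor (gd_cat X) (gd_cat Y);
  gm_f : forall d : gd_cat X, hom (fo (gd_G Y) (fo gm_F d)) (fo (gd_G X) d);
  gm_lax : IsLaxMonoidal gm_F;
  gm_mon : IsMonTrans (lax_comp gm_F (gd_G Y)) (gd_G X) gm_f;
  gm_iso : forall d : gd_cat X, IsIso (gm_f d);
  gm_tri : forall d : gd_cat X, gd_g X d ∘ gm_f d = gd_g Y (fo gm_F d) }.
Arguments gm_F {C T X Y} _.
Arguments gm_f {C T X Y} _ d.

Record TwoCell (C : SkewData) (T : C) (X Y : GradingData C T) (Ff Ff' : GMor X Y) := mkTwoCell {
  tc : forall d : gd_cat X, hom (fo (gm_F Ff) d) (fo (gm_F Ff') d);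
  tc_mon : IsMonTrans (gm_F Ff) (gm_F Ff') tc;
  tc_f : forall d : gd_cat X, gm_f Ff' d ∘ fm (gd_G Y) (tc d) = gm_f Ff d }.
Arguments tc {C T X Y Ff Ff'} _ d.

(* Z is pseudoterminal in Grade_M(T): for every grading X there is a
   morphism (F,f) : X -> Z, and an assignment, natural in (F',f'), of an
   invertible 2-cell (F',f') => (F,f) to every morphism (F',f') : X -> Z.
   (Vertical composition of 2-cells is componentwise composition.) *)
Definition PseudoTerminal (C : SkewData) (T : C) (eta : hom (sI C) T) (mu : hom (T ⊗ T) T)
    (M : MorClass C) (Z : GradingData C T) : Prop :=
  forall X : GradingData C T, IsGrading eta mu M X ->
  exists Ff : GMor X Z,
  exists beta : forall Ff' : GMor X Z, TwoCell Ff' Ff,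
    (forall Ff' : GMor X Z, exists inv : TwoCell Ff Ff',
        forall d : gd_cat X,
          tc inv d ∘ tc (beta Ff') d = idm _ /\ tc (beta Ff') d ∘ tc inv d = idm _) /\
    (forall (Ff1 Ff2 : GMor X Z) (gam : TwoCell Ff1 Ff2) (d : gd_cat X),
        tc (beta Ff2) d ∘ tc gam d = tc (beta Ff1) d).

Unset Implicit Arguments.
Record Setting := mkSetting {
  st_C : SkewData;
  st_T : st_C;
  st_eta : hom (sI st_C) st_T;
  st_mu : hom (st_T ⊗ st_T) st_T;
  st_E : MorClass st_C;
  st_M : MorClass st_C;
  st_skew : IsSkewMonoidal st_C;
  st_mon : IsMonoid st_eta st_mu;
  st_ofs : IsOFS st_E st_M;
  st_cl : forall (X Y : st_C) (e : hom X Y), st_E X Y e ->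
          forall (S : st_C) (s : hom S st_T), st_M S st_T s -> st_E _ _ (tm e (idm S)) }.
Set Implicit Arguments.

Definition Fact (C : Cat) (E M : MorClass C) (A B : C) (h : hom A B) :=
  {Z : C & {e : hom A Z & {m : hom Z B | E _ _ e /\ M _ _ m /\ m ∘ e = h}}}.

Definition factor (C : Cat) (E M : MorClass C) (H : IsOFS E M) (A B : C) (h : hom A B)
  : Fact E M h.
Proof.
  destruct (constructive_indefinite_description _ (ofs_fact H h)) as [Z HZ].
  destruct (constructive_indefinite_description _ HZ) as [e He].
  destruct (constructive_indefinite_description _ He) as [m Hm].
  exact (existT _ Z (existT _ e (exist _ m Hm))).
Defined.

Definition fZ (C : Cat) (E M : MorClass C) (A B : C) (h : hom A B) (F : Fact E M h) : C :=
  projT1 F.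
Definition fe (C : Cat) (E M : MorClass C) (A B : C) (h : hom A B) (F : Fact E M h)
  : hom A (fZ F) := projT1 (projT2 F).
Definition fmm (C : Cat) (E M : MorClass C) (A B : C) (h : hom A B) (F : Fact E M h)
  : hom (fZ F) B := proj1_sig (projT2 (projT2 F)).
Lemma fE (C : Cat) (E M : MorClass C) (A B : C) (h : hom A B) (F : Fact E M h) :
  E _ _ (fe F).
Proof. exact (proj1 (proj2_sig (projT2 (projT2 F)))). Qed.
Lemma fMM (C : Cat) (E M : MorClass C) (A B : C) (h : hom A B) (F : Fact E M h) :
  M _ _ (fmm F).
Proof. exact (proj1 (proj2 (proj2_sig (projT2 (projT2 F))))). Qed.
Lemma fcomm (C : Cat) (E M : MorClass C) (A B : C) (h : hom A B) (F : Fact E M h) :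
  fmm F ∘ fe F = h.
Proof. exact (proj2 (proj2 (proj2_sig (projT2 (projT2 F))))). Qed.

Definition diag (C : Cat) (E M : MorClass C) (H : IsOFS E M) (A B X Y : C)
    (e : hom A B) (m : hom X Y) (f : hom A X) (g : hom B Y)
    (He : E _ _ e) (Hm : M _ _ m) (Hsq : g ∘ e = m ∘ f)
  : {d : hom B X | d ∘ e = f /\ m ∘ d = g}.
Proof.
  apply constructive_indefinite_description.
  destruct (ofs_lift H He Hm Hsq) as [d [Hd _]]. exists d; exact Hd.
Defined.

Record MTobj (P : Setting) := mkMTobj {
  mS : st_C P;
  ms : hom mS (st_T P);
  mM : st_M P _ _ ms }.
Arguments mS {P} _.
Arguments ms {P} _.
Arguments mM {P} _.

Record MThom (P : Setting) (a b : MTobj P) := mkMThom {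
  mh : hom (mS a) (mS b);
  mh_eq : ms b ∘ mh = ms a }.
Arguments mh {P a b} _.
Arguments mh_eq {P a b} _.

Ltac prep P :=
  let HS := fresh "HS" in let HC := fresh "HC" in let HMo := fresh "HMo" in
  pose proof (st_skew P) as HS; pose proof (sk_isCat HS) as HC;
  pose proof (st_mon P) as HMo.

Definition MT_id (P : Setting) (a : MTobj P) : MThom a a.
Proof.
  refine (@mkMThom P a a (idm _) _). prep P. apply (comp_idr HC).
Defined.

Definition MT_comp (P : Setting) (a b c : MTobj P) (g : MThom b c) (f : MThom a b)
  : MThom a c.
Proof.
  refine (@mkMThom P a c (mh g ∘ mh f) _). prep P.
  rewrite (comp_assoc HC), (mh_eq g), (mh_eq f). reflexivity.
Defined.

Definition MTcat (P : Setting) : Cat := @mkCat (MTobj P) (@MThom P) (@MT_id P) (@MT_comp P).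

Definition uf (P : Setting) : Fact (st_E P) (st_M P) (st_eta P) := factor (st_ofs P) (st_eta P).
Definition MT_I (P : Setting) : MTobj P := @mkMTobj P _ _ (fMM (uf P)).
Definition qI (P : Setting) : hom (sI (st_C P)) (mS (MT_I P)) := fe (uf P).

Definition tf (P : Setting) (a b : MTobj P) : Fact (st_E P) (st_M P) (st_mu P ∘ tm (ms a) (ms b)) :=
  factor (st_ofs P) (st_mu P ∘ tm (ms a) (ms b)).
Definition MT_tens (P : Setting) (a b : MTobj P) : MTobj P := @mkMTobj P _ _ (fMM (tf a b)).
Definition qq (P : Setting) (a b : MTobj P) : hom (mS a ⊗ mS b) (mS (MT_tens a b)) :=
  fe (tf a b).

Lemma qq_E (P : Setting) (a b : MTobj P) : st_E P _ _ (qq a b).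
Proof. exact (fE _). Qed.
Lemma qq_comm (P : Setting) (a b : MTobj P) :
  ms (MT_tens a b) ∘ qq a b = st_mu P ∘ tm (ms a) (ms b).
Proof. exact (fcomm _). Qed.
Lemma qI_comm (P : Setting) : ms (MT_I P) ∘ qI P = st_eta P.
Proof. exact (fcomm _). Qed.

Lemma MT_tm_sq (P : Setting) (a1 a2 b1 b2 : MTobj P) (f : MThom a1 a2) (g : MThom b1 b2) :
  ms (MT_tens a1 b1) ∘ qq a1 b1 = ms (MT_tens a2 b2) ∘ (qq a2 b2 ∘ tm (mh f) (mh g)).
Proof.
  prep P. rewrite (comp_assoc HC), !qq_comm, <- (comp_assoc HC), <- (tm_comp HS),
    (mh_eq f), (mh_eq g). reflexivity.
Qed.

Definition MT_tmh (P : Setting) (a1 a2 b1 b2 : MTobj P) (f : MThom a1 a2) (g : MThom b1 b2)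
  : MThom (MT_tens a1 b1) (MT_tens a2 b2) :=
  let d := diag (st_ofs P) (qq_E a1 b1) (fMM (tf a2 b2)) (MT_tm_sq f g) in
  @mkMThom P (MT_tens a1 b1) (MT_tens a2 b2) (proj1_sig d) (proj2 (proj2_sig d)).

Lemma ell_E (P : Setting) (a : MTobj P) :
  st_E P _ _ (qq (MT_I P) a ∘ tm (qI P) (idm (mS a))).
Proof.
  apply (E_comp (st_ofs P)).
  - exact (st_cl P _ _ _ (fE (uf P)) _ _ (mM a)).
  - apply qq_E.
Qed.

Lemma ell_sq (P : Setting) (a : MTobj P) :
  ms (MT_tens (MT_I P) a) ∘ (qq (MT_I P) a ∘ tm (qI P) (idm (mS a)))
  = ms a ∘ slam (mS a).
Proof.
  prep P. rewrite (comp_assoc HC), qq_comm, <- (comp_assoc HC), <- (tm_comp HS),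
    qI_comm, (comp_idr HC).
  replace (tm (st_eta P) (ms a)) with (tm (st_eta P) (idm (st_T P)) ∘ tm (idm _) (ms a))
    by (rewrite <- (tm_comp HS), (comp_idr HC), (comp_idl HC); reflexivity).
  rewrite (comp_assoc HC), (mon_lunit HMo), (lam_nat HS). reflexivity.
Qed.

Definition MT_ell (P : Setting) (a : MTobj P) : MThom (MT_tens (MT_I P) a) a :=
  let d := diag (st_ofs P) (ell_E a) (mM a) (ell_sq a) in
  @mkMThom P (MT_tens (MT_I P) a) a (proj1_sig d) (proj2 (proj2_sig d)).

Definition MT_r (P : Setting) (a : MTobj P) : MThom a (MT_tens a (MT_I P)).
Proof.
  refine (@mkMThom P _ _ (qq a (MT_I P) ∘ tm (idm (mS a)) (qI P) ∘ srho (mS a)) _).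
  prep P. rewrite !(comp_assoc HC), qq_comm, <- (comp_assoc HC (st_mu P)),
    <- (tm_comp HS), (comp_idr HC), qI_comm.
  replace (tm (ms a) (st_eta P)) with (tm (idm (st_T P)) (st_eta P) ∘ tm (ms a) (idm _))
    by (rewrite <- (tm_comp HS), (comp_idr HC), (comp_idl HC); reflexivity).
  rewrite !(comp_assoc HC), <- (comp_assoc HC _ (tm (ms a) _)), (rho_nat HS),
    (comp_assoc HC), (mon_runit HMo), (comp_idl HC). reflexivity.
Defined.

Lemma a_E (P : Setting) (a b c : MTobj P) :
  st_E P _ _ (qq (MT_tens a b) c ∘ tm (qq a b) (idm (mS c))).
Proof.
  apply (E_comp (st_ofs P)).
  - exact (st_cl P _ _ _ (qq_E a b) _ _ (mM c)).
  - apply qq_E.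
Qed.

Lemma a_sq (P : Setting) (a b c : MTobj P) :
  ms (MT_tens (MT_tens a b) c) ∘ (qq (MT_tens a b) c ∘ tm (qq a b) (idm (mS c)))
  = ms (MT_tens a (MT_tens b c))
    ∘ (qq a (MT_tens b c) ∘ tm (idm (mS a)) (qq b c) ∘ salpha (mS a) (mS b) (mS c)).
Proof.
  prep P.
  rewrite (comp_assoc HC), qq_comm, <- (comp_assoc HC), <- (tm_comp HS), (comp_idr HC),
    qq_comm.
  rewrite !(comp_assoc HC), qq_comm, <- (comp_assoc HC (st_mu P)), <- (tm_comp HS),
    (comp_idr HC), qq_comm.
  replace (tm (st_mu P ∘ tm (ms a) (ms b)) (ms c))
    with (tm (st_mu P) (idm (st_T P)) ∘ tm (tm (ms a) (ms b)) (ms c))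
    by (rewrite <- (tm_comp HS), (comp_idl HC); reflexivity).
  replace (tm (ms a) (st_mu P ∘ tm (ms b) (ms c)))
    with (tm (idm (st_T P)) (st_mu P) ∘ tm (ms a) (tm (ms b) (ms c)))
    by (rewrite <- (tm_comp HS), (comp_idl HC); reflexivity).
  rewrite (comp_assoc HC), (mon_assoc HMo).
  repeat rewrite <- (comp_assoc HC).
  rewrite (alpha_nat HS). reflexivity.
Qed.

Definition MT_a (P : Setting) (a b c : MTobj P)
  : MThom (MT_tens (MT_tens a b) c) (MT_tens a (MT_tens b c)) :=
  let d := diag (st_ofs P) (a_E a b c) (fMM (tf a (MT_tens b c))) (a_sq a b c) in
  @mkMThom P (MT_tens (MT_tens a b) c) (MT_tens a (MT_tens b c)) (proj1_sig d) (proj2 (proj2_sig d)).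

Definition MTskew (P : Setting) : SkewData :=
  @mkSkew (MTcat P) (MT_I P) (@MT_tens P) (@MT_tmh P) (@MT_ell P) (@MT_r P) (@MT_a P).

Definition TM (P : Setting) : LaxFunctor (MTskew P) (st_C P) :=
  @mkLax (MTskew P) (st_C P) (@mS P) (fun a b h => @mh P a b h) (qI P) (@qq P).

Definition canonical_grading (P : Setting) : GradingData (st_C P) (st_T P) :=
  @mkGrading (st_C P) (st_T P) (MTskew P) (TM P) (fun a => @ms P a).

(* By uniqueness of diagonal fillers, two morphisms of M/T that agree after
   precomposition with a map in E are equal.  The structure maps of M/T are
   fillers against the E-maps q, q_{S,S'}; precomposing each skew monoidal
   axiom with a suitable composite of q's and q ⊗ S (in E by the closure
   hypothesis) reduces it to the same axiom in C, combined with those of T.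
   A grading (G, g) factors through M/T as d |-> (G d, g_d), with unit and
   multiplication the fillers of the squares formed by q, q_{S,S'} against the
   M-maps g_d.  For any other morphism (F', f'), the triangle g_d ∘ f'_d = s'
   makes each f'_d a morphism of M/T, and these form the invertible 2-cell
   (F', f') => (F, f); its naturality is the compatibility of 2-cells with f. *)
From Stdlib Require Import ProofIrrelevance ClassicalEpsilon.
Set Implicit Arguments.

Section CategoryFacts.
Variable C : Cat.
Hypothesis HC : IsCat C.

Lemma comp_segment2 {A B D E : C} {x : hom B D} {y : hom A B} {z : hom A D} :
  x ∘ y = z -> forall k : hom E A, x ∘ (y ∘ k) = z ∘ k.
Proof. intros H k. rewrite (comp_assoc HC), H. reflexivity. Qed.

Lemma comp_segment3 {A B D F E : C} {x : hom B D} {y : hom F B} {y' : hom A F}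
  {z : hom A D} :
  x ∘ (y ∘ y') = z -> forall k : hom E A, x ∘ (y ∘ (y' ∘ k)) = z ∘ k.
Proof. intros H k. rewrite !(comp_assoc HC), <- (comp_assoc HC x), H. reflexivity. Qed.

Lemma comp_segment4 {A B D F G E : C} {x : hom B D} {y : hom F B} {y' : hom G F}
  {y'' : hom A G} {z : hom A D} :
  x ∘ (y ∘ (y' ∘ y'')) = z -> forall k : hom E A, x ∘ (y ∘ (y' ∘ (y'' ∘ k))) = z ∘ k.
Proof. intros H k. rewrite <- H, !(comp_assoc HC). reflexivity. Qed.

Lemma ofs_lift_unique (E M : MorClass C) (HO : IsOFS E M) {A B X Y : C}
  {e : hom A B} {m : hom X Y} {d1 d2 : hom B X} :
  E _ _ e -> M _ _ m -> d1 ∘ e = d2 ∘ e -> m ∘ d1 = m ∘ d2 -> d1 = d2.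
Proof.
  intros He Hm H1 H2.
  assert (Hsq : (m ∘ d1) ∘ e = m ∘ (d1 ∘ e)) by (rewrite (comp_assoc HC); reflexivity).
  destruct (ofs_lift HO He Hm Hsq) as [d [_ Hu]].
  rewrite <- (Hu d1 (conj eq_refl eq_refl)). apply Hu. split; auto.
Qed.

Lemma diag_comm (E M : MorClass C) (HO : IsOFS E M) (A B X Y : C)
    (e : hom A B) (m : hom X Y) (f : hom A X) (g : hom B Y)
    (He : E _ _ e) (Hm : M _ _ m) (Hsq : g ∘ e = m ∘ f) :
  proj1_sig (diag HO He Hm Hsq) ∘ e = f.
Proof. exact (proj1 (proj2_sig (diag HO He Hm Hsq))). Qed.
End CategoryFacts.

Ltac rassoc HC := repeat rewrite <- (comp_assoc HC).

(* Rewrites with an equation whose left side is a composite of up to four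
   morphisms occurring anywhere inside a right-associated composite. *)
Tactic Notation "rewrite_segment" constr(HC) uconstr(H) :=
  first [ rewrite (comp_segment4 HC H) | rewrite (comp_segment3 HC H)
        | rewrite (comp_segment2 HC H) | rewrite H ];
  rassoc HC.

Section TensorFacts.
Variable C : SkewData.
Hypothesis HS : IsSkewMonoidal C.
Let HC := sk_isCat HS.

Lemma tm_merge {A B D A' B' D' : C} (g : hom B D) (f : hom A B) (g' : hom B' D')
  (f' : hom A' B') :
  tm g g' ∘ tm f f' = tm (g ∘ f) (g' ∘ f').
Proof. rewrite (tm_comp HS). reflexivity. Qed.

Lemma tm_split_right_first {A B A' B' : C} (f : hom A B) (g : hom A' B') :
  tm f g = tm f (idm _) ∘ tm (idm _) g.
Proof. rewrite <- (tm_comp HS), (comp_idl HC), (comp_idr HC). reflexivity. Qed.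

Lemma tm_split_left_first {A B A' B' : C} (f : hom A B) (g : hom A' B') :
  tm f g = tm (idm _) g ∘ tm f (idm _).
Proof. rewrite <- (tm_comp HS), (comp_idl HC), (comp_idr HC). reflexivity. Qed.

Lemma tm_comp_r {A B A' B' D' : C} (f : hom A B) (g : hom B' D') (h : hom A' B') :
  tm f (g ∘ h) = tm (idm _) g ∘ tm f h.
Proof. rewrite <- (tm_comp HS), (comp_idl HC). reflexivity. Qed.

Lemma tm_comp_l {A B D A' B' : C} (g : hom B D) (h : hom A B) (f : hom A' B') :
  tm (g ∘ h) f = tm g (idm _) ∘ tm h f.
Proof. rewrite <- (tm_comp HS), (comp_idl HC). reflexivity. Qed.

Lemma tm_interchange {A B A' B' : C} (f : hom A B) (g : hom A' B') :
  tm (idm B) g ∘ tm f (idm A') = tm f (idm B') ∘ tm (idm A) g.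
Proof. rewrite <- !(tm_comp HS), !(comp_idl HC), !(comp_idr HC). reflexivity. Qed.
End TensorFacts.

Lemma montrans_inv (A D : SkewData) (HD : IsSkewMonoidal D) (F F' : LaxFunctor A D)
  (b : forall a, hom (fo F' a) (fo F a)) (g : forall a, hom (fo F a) (fo F' a)) :
  IsMonTrans F' F b -> (forall a, g a ∘ b a = idm _) -> (forall a, b a ∘ g a = idm _) ->
  IsMonTrans F F' g.
Proof.
  pose proof (sk_isCat HD) as HC.
  intros [Hn [He Hm]] Hgb Hbg. split; [|split].
  - intros x y h.
    rewrite <- (comp_idr HC (fm F h)), <- (Hbg x), (comp_assoc HC (fm F h)), <- Hn.
    rewrite !(comp_assoc HC), Hgb, (comp_idl HC). reflexivity.
  - rewrite <- He, (comp_assoc HC), Hgb, (comp_idl HC). reflexivity.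
  - intros x y.
    rewrite <- (comp_idr HC (lf_mu F x y)), <- (tm_id HD), <- (Hbg x), <- (Hbg y),
      (tm_comp HD).
    rewrite (comp_assoc HC (lf_mu F x y)), <- Hm, !(comp_assoc HC), Hgb, (comp_idl HC).
    reflexivity.
Qed.

Ltac simpl_MT := cbn [sk_cat gd_cat gd_G gd_g canonical_grading mh MT_comp MT_id MTcat
  comp idm MTskew tm slam srho salpha sI stens].

Section CanonicalGrading.
Variable P : Setting.
Local Notation C := (st_C P).
Let HS := st_skew P.
Let HC := sk_isCat HS.
Let HO := st_ofs P.

Lemma MThom_ext (a b : MTobj P) (f g : MThom a b) : mh f = mh g -> f = g.
Proof.
  destruct f as [f Hf], g as [g Hg]; simpl; intros ->; f_equal; apply proof_irrelevance.
Qed.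

Lemma MThom_E_cancel {a b : MTobj P} {A : C} {e : hom A (mS a)} : st_E P _ _ e ->
  forall h h' : MThom a b, mh h ∘ e = mh h' ∘ e -> h = h'.
Proof.
  intros He h h' H. apply MThom_ext. apply (ofs_lift_unique HC HO He (mM b) H).
  rewrite (mh_eq h), (mh_eq h'). reflexivity.
Qed.

Definition MT_lift {a b : MTobj P} {A : C} {e : hom A (mS a)} {f : hom A (mS b)}
    (He : st_E P _ _ e) (Hsq : ms a ∘ e = ms b ∘ f) : MThom a b :=
  let d := diag HO He (mM b) Hsq in
  @mkMThom P a b (proj1_sig d) (proj2 (proj2_sig d)).

Lemma MT_lift_comm {a b : MTobj P} {A : C} {e : hom A (mS a)} {f : hom A (mS b)}
    (He : st_E P _ _ e) (Hsq : ms a ∘ e = ms b ∘ f) :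
  mh (MT_lift He Hsq) ∘ e = f.
Proof. apply diag_comm. Qed.

Lemma E_tens_obj {A B : C} {e : hom A B} (c : MTobj P) :
  st_E P _ _ e -> st_E P _ _ (tm e (idm (mS c))).
Proof. intro He. exact (st_cl P _ _ _ He _ _ (mM c)). Qed.

Lemma qI_E : st_E P _ _ (qI P).
Proof. exact (fE _). Qed.

Lemma MT_tmh_q (a1 a2 b1 b2 : MTobj P) (f : MThom a1 a2) (g : MThom b1 b2) :
  mh (MT_tmh f g) ∘ qq a1 b1 = qq a2 b2 ∘ tm (mh f) (mh g).
Proof. apply diag_comm. Qed.

Lemma MT_ell_q (a : MTobj P) :
  mh (MT_ell a) ∘ (qq (MT_I P) a ∘ tm (qI P) (idm (mS a))) = slam (mS a).
Proof. apply diag_comm. Qed.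

Lemma MT_a_q (a b c : MTobj P) :
  mh (MT_a a b c) ∘ (qq (MT_tens a b) c ∘ tm (qq a b) (idm (mS c)))
  = qq a (MT_tens b c) ∘ (tm (idm (mS a)) (qq b c) ∘ salpha (mS a) (mS b) (mS c)).
Proof. rewrite (comp_assoc HC (qq a (MT_tens b c))). apply diag_comm. Qed.

Lemma MT_r_def (a : MTobj P) :
  mh (MT_r a) = qq a (MT_I P) ∘ (tm (idm (mS a)) (qI P) ∘ srho (mS a)).
Proof. simpl. rewrite (comp_assoc HC). reflexivity. Qed.

Lemma MT_isCat : IsCat (MTcat P).
Proof.
  split; intros; apply MThom_ext; simpl.
  - apply (comp_idl HC).
  - apply (comp_idr HC).
  - apply (comp_assoc HC).
Qed.

Lemma MT_tm_id (a b : MTobj P) : MT_tmh (MT_id a) (MT_id b) = MT_id (MT_tens a b).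
Proof.
  apply (MThom_E_cancel (qq_E a b)). rewrite MT_tmh_q. simpl_MT.
  rewrite (tm_id HS), (comp_idr HC), (comp_idl HC). reflexivity.
Qed.

Lemma MT_tm_comp (a1 a2 a3 b1 b2 b3 : MTobj P) (g : MThom a2 a3) (f : MThom a1 a2)
  (g' : MThom b2 b3) (f' : MThom b1 b2) :
  MT_tmh (MT_comp g f) (MT_comp g' f') = MT_comp (MT_tmh g g') (MT_tmh f f').
Proof.
  apply (MThom_E_cancel (qq_E _ _)). rewrite MT_tmh_q. simpl_MT.
  rewrite <- (comp_assoc HC), MT_tmh_q, (comp_assoc HC), MT_tmh_q.
  rewrite <- (comp_assoc HC), (tm_comp HS). reflexivity.
Qed.

Lemma MT_lam_nat (a b : MTobj P) (f : MThom a b) :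
  MT_comp f (MT_ell a) = MT_comp (MT_ell b) (MT_tmh (MT_id (MT_I P)) f).
Proof.
  apply (MThom_E_cancel (ell_E a)). simpl_MT. rassoc HC.
  rewrite_segment HC (MT_ell_q a). rewrite_segment HC (MT_tmh_q _ _). simpl_MT.
  rewrite_segment HC (tm_merge HS _ _ _ _).
  rewrite (comp_idl HC), (comp_idr HC), (tm_split_right_first HS (qI P) (mh f)). rassoc HC.
  rewrite_segment HC (MT_ell_q b). apply (lam_nat HS).
Qed.

Lemma MT_rho_nat (a b : MTobj P) (f : MThom a b) :
  MT_comp (MT_tmh f (MT_id (MT_I P))) (MT_r a) = MT_comp (MT_r b) f.
Proof.
  apply MThom_ext. simpl_MT. rewrite !MT_r_def. rassoc HC.
  rewrite_segment HC (MT_tmh_q _ _). simpl_MT.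
  rewrite_segment HC (tm_merge HS _ _ _ _).
  rewrite (comp_idl HC), (comp_idr HC), (tm_split_left_first HS (mh f) (qI P)). rassoc HC.
  rewrite (rho_nat HS). reflexivity.
Qed.

Lemma MT_alpha_nat (x x' y y' z z' : MTobj P) (f : MThom x x') (g : MThom y y')
  (h : MThom z z') :
  MT_comp (MT_tmh f (MT_tmh g h)) (MT_a x y z)
  = MT_comp (MT_a x' y' z') (MT_tmh (MT_tmh f g) h).
Proof.
  apply (MThom_E_cancel (a_E x y z)). simpl_MT. rassoc HC.
  rewrite_segment HC (MT_a_q _ _ _). rewrite_segment HC (MT_tmh_q _ _).
  rewrite_segment HC (tm_merge HS _ _ _ _).
  rewrite (comp_idr HC), MT_tmh_q, (tm_comp_r HS). rassoc HC.
  rewrite_segment HC (alpha_nat HS _ _ _). rewrite_segment HC (MT_tmh_q _ _).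
  rewrite_segment HC (tm_merge HS _ _ _ _).
  rewrite (comp_idr HC), MT_tmh_q, (tm_comp_l HS). rassoc HC.
  rewrite_segment HC (MT_a_q _ _ _). reflexivity.
Qed.

Lemma MT_sk_ax1 : MT_comp (MT_ell (MT_I P)) (MT_r (MT_I P)) = MT_id (MT_I P).
Proof.
  apply (MThom_E_cancel qI_E). simpl_MT. rewrite MT_r_def. rassoc HC.
  rewrite <- (rho_nat HS (qI P)). rassoc HC.
  rewrite_segment HC (tm_interchange HS _ _). rewrite_segment HC (MT_ell_q _).
  rewrite_segment HC (eq_sym (lam_nat HS _)).
  rewrite (comp_idl HC).
  transitivity (qI P ∘ idm _); [f_equal; exact (sk_ax1 HS) | apply (comp_idr HC)].
Qed.

Lemma MT_sk_ax2 (a b : MTobj P) :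
  MT_comp (MT_comp (MT_tmh (MT_id a) (MT_ell b)) (MT_a a (MT_I P) b))
    (MT_tmh (MT_r a) (MT_id b))
  = MT_id (MT_tens a b).
Proof.
  apply (MThom_E_cancel (qq_E a b)). simpl_MT. rassoc HC.
  rewrite_segment HC (MT_tmh_q _ _). simpl_MT.
  rewrite MT_r_def, !(tm_comp_l HS). rassoc HC.
  rewrite_segment HC (MT_a_q _ _ _). rewrite_segment HC (eq_sym (alpha_nat HS _ _ _)).
  rewrite_segment HC (MT_tmh_q _ _). simpl_MT.
  rewrite_segment HC (tm_merge HS _ _ _ _). rewrite_segment HC (tm_merge HS _ _ _ _).
  rewrite !(comp_idl HC), (MT_ell_q b), (comp_assoc HC (tm _ _)), (sk_ax2 HS),
    (comp_idr HC).
  reflexivity.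
Qed.

Lemma MT_sk_ax3 (a b : MTobj P) :
  MT_comp (MT_ell (MT_tens a b)) (MT_a (MT_I P) a b) = MT_tmh (MT_ell a) (MT_id b).
Proof.
  apply (MThom_E_cancel
           (E_comp HO (E_tens_obj b (E_tens_obj a qI_E)) (a_E (MT_I P) a b))).
  simpl_MT. rassoc HC.
  rewrite_segment HC (MT_a_q _ _ _). rewrite_segment HC (eq_sym (alpha_nat HS _ _ _)).
  rewrite (tm_id HS).
  rewrite_segment HC (tm_interchange HS _ _). rewrite_segment HC (MT_ell_q _).
  rewrite_segment HC (eq_sym (lam_nat HS _)). rewrite_segment HC (MT_tmh_q _ _). simpl_MT.
  rewrite_segment HC (tm_merge HS _ _ _ _). rewrite_segment HC (tm_merge HS _ _ _ _).
  rewrite !(comp_idl HC), (MT_ell_q a). f_equal. exact (sk_ax3 HS _ _).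
Qed.

Lemma MT_sk_ax4 (a b : MTobj P) :
  MT_comp (MT_a a b (MT_I P)) (MT_r (MT_tens a b)) = MT_tmh (MT_id a) (MT_r b).
Proof.
  apply (MThom_E_cancel (qq_E a b)). simpl_MT. rewrite !MT_r_def. rassoc HC.
  rewrite_segment HC (eq_sym (rho_nat HS _)). rewrite_segment HC (tm_interchange HS _ _).
  rewrite_segment HC (MT_a_q _ _ _).
  pose proof (alpha_nat HS (idm (mS a)) (idm (mS b)) (qI P)) as Halpha.
  rewrite (tm_id HS) in Halpha.
  rewrite_segment HC (eq_sym Halpha). rewrite (sk_ax4 HS).
  rewrite_segment HC (tm_merge HS _ _ _ _). rewrite_segment HC (tm_merge HS _ _ _ _).
  rewrite !(comp_idl HC).
  rewrite_segment HC (MT_tmh_q _ _). simpl_MT. rewrite MT_r_def. rassoc HC. reflexivity.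
Qed.

Lemma MT_sk_ax5 (a b c d : MTobj P) :
  MT_comp (MT_comp (MT_tmh (MT_id a) (MT_a b c d)) (MT_a a (MT_tens b c) d))
    (MT_tmh (MT_a a b c) (MT_id d))
  = MT_comp (MT_a a b (MT_tens c d)) (MT_a (MT_tens a b) c d).
Proof.
  apply (MThom_E_cancel
           (E_comp HO (E_tens_obj d (E_tens_obj c (qq_E a b))) (a_E (MT_tens a b) c d))).
  simpl_MT. rassoc HC.
  transitivity (qq a (MT_tens b (MT_tens c d)) ∘ (tm (idm (mS a)) (qq b (MT_tens c d))
     ∘ (tm (idm (mS a)) (tm (idm (mS b)) (qq c d))
     ∘ (salpha (mS a) (mS b) (mS c ⊗ mS d) ∘ salpha (mS a ⊗ mS b) (mS c) (mS d))))).
  - rewrite_segment HC (MT_tmh_q _ _). simpl_MT.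
    rewrite_segment HC (tm_merge HS (qq (MT_tens a b) c) _ (idm (mS d)) _).
    rewrite_segment HC (tm_merge HS (mh (MT_a a b c)) _ _ _).
    rewrite !(comp_idl HC), (MT_a_q a b c), !(tm_comp_l HS). rassoc HC.
    rewrite_segment HC (MT_a_q _ _ _). rewrite_segment HC (eq_sym (alpha_nat HS _ _ _)).
    rewrite_segment HC (MT_tmh_q _ _). simpl_MT.
    rewrite_segment HC (tm_merge HS _ _ (qq (MT_tens b c) d) _).
    rewrite_segment HC (tm_merge HS _ _ (mh (MT_a b c d)) _).
    rewrite !(comp_idl HC). rassoc HC. rewrite (MT_a_q b c d), !(tm_comp_r HS). rassoc HC.
    pose proof (sk_ax5 HS (mS a) (mS b) (mS c) (mS d)) as Hpentagon.
    rewrite <- !(comp_assoc HC) in Hpentagon.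
    rewrite Hpentagon. reflexivity.
  - symmetry.
    rewrite_segment HC (MT_a_q _ _ _). rewrite_segment HC (eq_sym (alpha_nat HS _ _ _)).
    rewrite (tm_id HS).
    rewrite_segment HC (tm_interchange HS _ _). rewrite_segment HC (MT_a_q _ _ _).
    pose proof (alpha_nat HS (idm (mS a)) (idm (mS b)) (qq c d)) as Halpha.
    rewrite (tm_id HS) in Halpha.
    rewrite_segment HC (eq_sym Halpha). reflexivity.
Qed.

Lemma MTskew_isSkewMonoidal : IsSkewMonoidal (MTskew P).
Proof.
  split.
  - exact MT_isCat.
  - intros; exact (MT_tm_id _ _).
  - intros; exact (MT_tm_comp _ _ _ _).
  - intros; exact (MT_lam_nat _).
  - intros; exact (MT_rho_nat _).
  - intros; exact (MT_alpha_nat _ _ _).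
  - exact MT_sk_ax1.
  - intros; exact (MT_sk_ax2 _ _).
  - intros; exact (MT_sk_ax3 _ _).
  - intros; exact (MT_sk_ax4 _ _).
  - intros; exact (MT_sk_ax5 _ _ _ _).
Qed.

Lemma TM_isLaxMonoidal : IsLaxMonoidal (TM P).
Proof.
  split; cbn [fm TM lf_mu lf_eta fo]; intros.
  - reflexivity.
  - reflexivity.
  - symmetry. exact (MT_tmh_q _ _).
  - rewrite <- (comp_assoc HC). exact (MT_ell_q _).
  - rewrite MT_r_def, (comp_assoc HC). reflexivity.
  - rewrite <- !(comp_assoc HC), MT_a_q, !(comp_assoc HC). reflexivity.
Qed.

Lemma canonical_grading_isGrading :
  IsGrading (st_eta P) (st_mu P) (st_M P) (canonical_grading P).
Proof.
  split; [exact MTskew_isSkewMonoidal|]. split; [exact TM_isLaxMonoidal|].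
  split; [|split; [|split]].
  - intros d d' h. exact (mh_eq h).
  - exact (qI_comm P).
  - intros d d'. exact (qq_comm d d').
  - intros d. exact (mM d).
Qed.
End CanonicalGrading.

Section GradingFacts.
Variables (C : SkewData) (T : C) (eta : hom (sI C) T) (mu : hom (T ⊗ T) T).
Variables (M : MorClass C) (X : GradingData C T).
Hypothesis HX : IsGrading eta mu M X.

Lemma grading_lax : IsLaxMonoidal (gd_G X).
Proof. exact (proj1 (proj2 HX)). Qed.

Lemma grading_nat {d d' : gd_cat X} (h : hom d d') : gd_g X d' ∘ fm (gd_G X) h = gd_g X d.
Proof. exact (proj1 (proj2 (proj2 HX)) d d' h). Qed.

Lemma grading_unit : gd_g X (sI (gd_cat X)) ∘ lf_eta (gd_G X) = eta.
Proof. exact (proj1 (proj2 (proj2 (proj2 HX)))). Qed.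

Lemma grading_mult (d d' : gd_cat X) :
  gd_g X (d ⊗ d') ∘ lf_mu (gd_G X) d d' = mu ∘ tm (gd_g X d) (gd_g X d').
Proof. exact (proj1 (proj2 (proj2 (proj2 (proj2 HX)))) d d'). Qed.

Lemma grading_M (d : gd_cat X) : M _ _ (gd_g X d).
Proof. exact (proj2 (proj2 (proj2 (proj2 (proj2 HX)))) d). Qed.
End GradingFacts.

Section Pseudoterminality.
Variable P : Setting.
Let HS := st_skew P.
Let HC := sk_isCat HS.
Variable X : GradingData (st_C P) (st_T P).
Hypothesis HX : IsGrading (st_eta P) (st_mu P) (st_M P) X.
Local Notation G := (gd_G X).
Local Notation D := (gd_cat X).
Local Notation g := (gd_g X).
Local Notation Can := (canonical_grading P).

Definition to_MT_obj (d : D) : MTobj P := @mkMTobj P (fo G d) (g d) (grading_M HX d).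

Definition to_MT_hom (d d' : D) (h : hom d d') : MThom (to_MT_obj d) (to_MT_obj d') :=
  @mkMThom P (to_MT_obj d) (to_MT_obj d') (fm G h) (grading_nat HX h).

Lemma to_MT_unit_sq : ms (MT_I P) ∘ qI P = ms (to_MT_obj (sI D)) ∘ lf_eta G.
Proof. rewrite (qI_comm P). symmetry. exact (grading_unit HX). Qed.

Definition to_MT_unit : MThom (MT_I P) (to_MT_obj (sI D)) :=
  MT_lift (qI_E P) to_MT_unit_sq.

Lemma to_MT_mult_sq (d d' : D) :
  ms (MT_tens (to_MT_obj d) (to_MT_obj d')) ∘ qq (to_MT_obj d) (to_MT_obj d')
  = ms (to_MT_obj (d ⊗ d')) ∘ lf_mu G d d'.
Proof. rewrite qq_comm. symmetry. exact (grading_mult HX d d'). Qed.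

Definition to_MT_mult (d d' : D) :
  MThom (MT_tens (to_MT_obj d) (to_MT_obj d')) (to_MT_obj (d ⊗ d')) :=
  MT_lift (qq_E _ _) (to_MT_mult_sq d d').

Definition to_MT : LaxFunctor D (MTskew P) :=
  @mkLax D (MTskew P) to_MT_obj to_MT_hom to_MT_unit to_MT_mult.

Lemma to_MT_unit_q : mh to_MT_unit ∘ qI P = lf_eta G.
Proof. apply MT_lift_comm. Qed.

Lemma to_MT_mult_q (d d' : D) :
  mh (to_MT_mult d d') ∘ qq (to_MT_obj d) (to_MT_obj d') = lf_mu G d d'.
Proof. apply MT_lift_comm. Qed.

Lemma to_MT_isLaxMonoidal : IsLaxMonoidal to_MT.
Proof.
  pose proof (grading_lax HX) as HL.
  split; cbn [fm to_MT lf_mu lf_eta fo MTskew tm comp idm slam srho salpha sI stens MTcat];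
    intros.
  - apply MThom_ext. exact (lf_id HL a).
  - apply MThom_ext. apply (lf_comp HL).
  - apply (MThom_E_cancel (qq_E _ _)). simpl_MT. rassoc HC.
    rewrite_segment HC (MT_tmh_q _ _). rewrite_segment HC (to_MT_mult_q _ _).
    cbn [mh to_MT_hom]. rewrite_segment HC (to_MT_mult_q _ _). apply (lf_mu_nat HL).
  - apply (MThom_E_cancel (ell_E _)). simpl_MT. rassoc HC.
    rewrite_segment HC (MT_tmh_q _ _). rewrite_segment HC (to_MT_mult_q _ _). simpl_MT.
    rewrite_segment HC (tm_merge HS _ _ _ _).
    rewrite (comp_idl HC), to_MT_unit_q, MT_ell_q. cbn [mh to_MT_hom].
    rewrite (comp_assoc HC). exact (lf_lunit HL a).
  - apply MThom_ext. simpl_MT. rewrite MT_r_def. rassoc HC.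
    rewrite_segment HC (MT_tmh_q _ _). rewrite_segment HC (to_MT_mult_q _ _). simpl_MT.
    rewrite_segment HC (tm_merge HS _ _ _ _).
    rewrite (comp_idl HC), to_MT_unit_q. cbn [mh to_MT_hom].
    rewrite (comp_assoc HC). exact (lf_runit HL a).
  - apply (MThom_E_cancel (a_E _ _ _)). simpl_MT. rassoc HC. cbn [mh to_MT_hom].
    transitivity (fm G (salpha a b c) ∘ (lf_mu G (a ⊗ b) c ∘ tm (lf_mu G a b) (idm (fo G c)))).
    + rewrite_segment HC (MT_tmh_q _ _). rewrite_segment HC (to_MT_mult_q _ _). simpl_MT.
      rewrite_segment HC (tm_merge HS (mh (to_MT_mult a b)) _ _ _).
      rewrite (comp_idl HC), to_MT_mult_q. reflexivity.
    + rewrite (comp_assoc HC), (lf_assoc HL). rassoc HC.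
      rewrite_segment HC (MT_a_q _ _ _). rewrite_segment HC (MT_tmh_q _ _).
      rewrite_segment HC (to_MT_mult_q _ _). simpl_MT.
      rewrite_segment HC (tm_merge HS _ _ _ _).
      rewrite (comp_idl HC), to_MT_mult_q. reflexivity.
Qed.

Lemma to_MT_montrans : IsMonTrans (lax_comp to_MT (TM P)) G (fun d => idm (fo G d)).
Proof.
  split; [|split]; cbn [lax_comp fm fo lf_eta lf_mu to_MT TM].
  - intros a b h. cbn [mh to_MT_hom]. rewrite (comp_idl HC), (comp_idr HC). reflexivity.
  - rewrite (comp_idl HC). exact to_MT_unit_q.
  - intros a b. rewrite (comp_idl HC), (tm_id HS), (comp_idr HC). exact (to_MT_mult_q a b).
Qed.

Definition to_MT_gmor : GMor X Can.
Proof.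
  refine (@mkGMor _ _ X Can to_MT (fun d => idm (fo G d))
            to_MT_isLaxMonoidal to_MT_montrans _ _).
  - intro d. exists (idm _). split; apply (comp_idl HC).
  - intro d. apply (comp_idr HC).
Defined.

Definition gmor_to_MT_hom (Ff : GMor X Can) (d : D) : MThom (fo (gm_F Ff) d) (to_MT_obj d) :=
  @mkMThom P (fo (gm_F Ff) d) (to_MT_obj d) (gm_f Ff d) (gm_tri Ff d).

Lemma gmor_to_MT_montrans (Ff : GMor X Can) :
  IsMonTrans (gm_F Ff) to_MT (gmor_to_MT_hom Ff).
Proof.
  destruct (gm_mon Ff) as [Hn [He Hm]]. split; [|split].
  - intros a b h. apply MThom_ext. simpl_MT. exact (Hn a b h).
  - apply (MThom_E_cancel (qI_E P)). simpl_MT. rassoc HC. cbn [to_MT lf_eta].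
    transitivity (lf_eta G); [exact He | symmetry; exact to_MT_unit_q].
  - intros a b. apply (MThom_E_cancel (qq_E _ _)). simpl_MT. rassoc HC. cbn [to_MT lf_mu].
    rewrite_segment HC (MT_tmh_q _ _). rewrite_segment HC (to_MT_mult_q _ _).
    exact (Hm a b).
Qed.

Definition to_MT_2cell (Ff : GMor X Can) : TwoCell Ff to_MT_gmor.
Proof.
  refine (@mkTwoCell _ _ X Can Ff to_MT_gmor (gmor_to_MT_hom Ff)
            (gmor_to_MT_montrans Ff) _).
  intro d. cbn [to_MT_gmor gm_f]. apply (comp_idl HC).
Defined.

Definition gmor_inv (Ff : GMor X Can) (d : D) : hom (fo G d) (mS (fo (gm_F Ff) d)) :=
  proj1_sig (constructive_indefinite_description _ (gm_iso Ff d)).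

Lemma gmor_inv_l (Ff : GMor X Can) (d : D) : gmor_inv Ff d ∘ gm_f Ff d = idm _.
Proof. exact (proj1 (proj2_sig (constructive_indefinite_description _ (gm_iso Ff d)))). Qed.

Lemma gmor_inv_r (Ff : GMor X Can) (d : D) : gm_f Ff d ∘ gmor_inv Ff d = idm _.
Proof. exact (proj2 (proj2_sig (constructive_indefinite_description _ (gm_iso Ff d)))). Qed.

Lemma gmor_inv_tri (Ff : GMor X Can) (d : D) :
  ms (fo (gm_F Ff) d) ∘ gmor_inv Ff d = ms (to_MT_obj d).
Proof.
  transitivity ((g d ∘ gm_f Ff d) ∘ gmor_inv Ff d).
  - f_equal. symmetry. exact (gm_tri Ff d).
  - rewrite <- (comp_assoc HC), gmor_inv_r. apply (comp_idr HC).
Qed.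

Definition to_MT_gmor_hom (Ff : GMor X Can) (d : D) : MThom (to_MT_obj d) (fo (gm_F Ff) d) :=
  @mkMThom P (to_MT_obj d) (fo (gm_F Ff) d) (gmor_inv Ff d) (gmor_inv_tri Ff d).

Lemma to_MT_gmor_hom_l (Ff : GMor X Can) (d : D) :
  MT_comp (to_MT_gmor_hom Ff d) (gmor_to_MT_hom Ff d) = MT_id _.
Proof. apply MThom_ext. exact (gmor_inv_l Ff d). Qed.

Lemma to_MT_gmor_hom_r (Ff : GMor X Can) (d : D) :
  MT_comp (gmor_to_MT_hom Ff d) (to_MT_gmor_hom Ff d) = MT_id _.
Proof. apply MThom_ext. exact (gmor_inv_r Ff d). Qed.

Definition to_MT_2cell_inv (Ff : GMor X Can) : TwoCell to_MT_gmor Ff.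
Proof.
  refine (@mkTwoCell _ _ X Can to_MT_gmor Ff (to_MT_gmor_hom Ff)
            (@montrans_inv _ _ (MTskew_isSkewMonoidal P) _ _ _ _ (gmor_to_MT_montrans Ff)
               (to_MT_gmor_hom_l Ff) (to_MT_gmor_hom_r Ff)) _).
  intro d. exact (gmor_inv_r Ff d).
Defined.

Lemma to_MT_2cell_natural (Ff1 Ff2 : GMor X Can) (gam : TwoCell Ff1 Ff2) (d : D) :
  tc (to_MT_2cell Ff2) d ∘ tc gam d = tc (to_MT_2cell Ff1) d.
Proof. apply MThom_ext. exact (tc_f gam d). Qed.

Lemma canonical_grading_pseudoterminal_at :
  exists Ff : GMor X Can,
  exists beta : forall Ff' : GMor X Can, TwoCell Ff' Ff,
    (forall Ff' : GMor X Can, exists inv : TwoCell Ff Ff',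
        forall d : D,
          tc inv d ∘ tc (beta Ff') d = idm _ /\ tc (beta Ff') d ∘ tc inv d = idm _) /\
    (forall (Ff1 Ff2 : GMor X Can) (gam : TwoCell Ff1 Ff2) (d : D),
        tc (beta Ff2) d ∘ tc gam d = tc (beta Ff1) d).
Proof.
  exists to_MT_gmor, to_MT_2cell. split.
  - intro Ff. exists (to_MT_2cell_inv Ff). intro d.
    split; [exact (to_MT_gmor_hom_l Ff d) | exact (to_MT_gmor_hom_r Ff d)].
  - exact to_MT_2cell_natural.
Qed.
End Pseudoterminality.

Lemma canonical_grading_pseudoterminal (P : Setting) :
  PseudoTerminal (st_eta P) (st_mu P) (st_M P) (canonical_grading P).
Proof. intros X HX. exact (canonical_grading_pseudoterminal_at _ HX). Qed.

Unset Implicit Arguments.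

Theorem theorem3p11 (C : SkewData) (T : C) (eta : hom (sI C) T) (mu : hom (T ⊗ T) T)
  (E M : MorClass C)
  (HC : IsSkewMonoidal C) (HT : IsMonoid eta mu) (HO : IsOFS E M)
  (Hcl : forall (X Y : C) (e : hom X Y), E X Y e ->
         forall (S : C) (s : hom S T), M S T s -> E _ _ (tm e (idm S))) :
  let Can := canonical_grading (mkSetting C T eta mu E M HC HT HO Hcl) in
  IsGrading eta mu M Can /\ PseudoTerminal eta mu M Can.
Proof.
  set (P := mkSetting C T eta mu E M HC HT HO Hcl). intros Can. split.
  - exact (canonical_grading_isGrading P).
  - exact (canonical_grading_pseudoterminal P).
Qed.
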